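(* For integers $a\geq1$ and $n\geq1$ let $f_{2n+1}(a)=\sum_{k=-(a-1)}^{a-1}\big(1-\frac{k^2}{a^2}\big)^{n}$. Then: (i) for every integer $a\geq1$, $f_3(a)=\frac{4a}{3}-\frac{1}{3a}$; (ii) for every $n\geq2$, as $a\to\infty$ ($a$ integer), $$f_{2n+1}(a)=\frac{2^{2n+1}(n!)^2}{(2n+1)!}\,a+o(a^{-2});$$ (iii) for every $n\geq2$, with $m=2n+1$, $p_k=f_{m}(a)^{-1}(1-k^2/a^2)^{n}$ for $|k|\leq a-1$ (and $p_k=0$ otherwise) and $U(a)=\sum_k k^2p_k$, one has, as $a\to\infty$, $$U(a)=\frac{a^2}{m+2}+o(a^{-1}).$$
   Context: $f_m(a)$ is the partition function of the discrete Tsallis maximizer with $q>1$, written with $m=\frac{q+1}{q-1}$ (so the exponent is $\frac{m-1}{2}=n$) and $a^2=k_BT$; $U$ is the mean energy (variance). *)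

From Stdlib Require Import Reals.
From Coquelicot Require Import Coquelicot.
Open Scope R_scope.

Definition weight (n a : nat) (k : R) : R := (1 - k ^ 2 / (INR a) ^ 2) ^ n.

(* f_{2n+1}(a) = sum_{k=-(a-1)}^{a-1} (1 - k^2/a^2)^n ;
   index j = 0 .. 2(a-1) corresponds to k = j - (a-1). *)
Definition fT (n a : nat) : R :=
  sum_f_R0 (fun j => weight n a (INR j - (INR a - 1))) (2 * (a - 1)).

Definition pT (n a : nat) (k : Z) : R :=
  if (Z.abs k <=? Z.of_nat a - 1)%Z then weight n a (IZR k) / fT n a else 0.

(* U(a) = sum_k k^2 p_k; p_k vanishes outside |k| <= a-1, so the sum is
   taken over that range: k = j - (a-1), j = 0 .. 2(a-1). *)
Definition UT (n a : nat) : R :=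
  sum_f_R0 (fun j => let k := (Z.of_nat j - (Z.of_nat a - 1))%Z in
                     IZR k ^ 2 * pT n a k) (2 * (a - 1)).

From Stdlib Require Import Reals Lra Lia.
From Coquelicot Require Import Coquelicot.
Open Scope R_scope.

(* Expanding the weight binomially,
     f_{2n+1}(a) = Σ_i (-1)^i C(n,i) a^{-2i} T_i(a),   T_i(a) = Σ_{|k|<a} k^{2i},
   and by Euler–Maclaurin a^{-2i} T_i(a) = a/(i + 1/2) - 1 + i/(3a) + O(a^{-3}).
   For n ≥ 2 the n-th difference in i kills the terms affine in i and maps
   1/(i + x) to n!/(x (x+1) ⋯ (x+n)), so f_{2n+1}(a) = a n!/((1/2)(3/2) ⋯ (n+1/2)) + O(a^{-3}).
   The numerator Σ k^2 (1 - k^2/a^2)^n of U is a^2 times the same difference shifted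
   by one index, i.e. a^3 n!/((3/2) ⋯ (n+3/2)) + O(a^{-1}); U is the quotient. *)

(* [ndiff n h] is (-Δ)^n h at 0, that is Σ_{i ≤ n} (-1)^i C(n,i) h i. *)
Fixpoint ndiff (n : nat) (h : nat -> R) : R :=
  match n with O => h O | S m => ndiff m (fun i => h i - h (S i)) end.

Lemma ndiff_ext n : forall h1 h2, (forall i, h1 i = h2 i) -> ndiff n h1 = ndiff n h2.
Proof.
  induction n; intros h1 h2 H; simpl; [apply H |].
  apply IHn; intros; rewrite !H; reflexivity.
Qed.

Lemma ndiff_lin n : forall c1 c2 h1 h2,
  ndiff n (fun i => c1 * h1 i + c2 * h2 i) = c1 * ndiff n h1 + c2 * ndiff n h2.
Proof.
  induction n; intros; simpl; [reflexivity |].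
  rewrite <- IHn; apply ndiff_ext; intros; ring.
Qed.

Lemma ndiff_scal n c h : ndiff n (fun i => c * h i) = c * ndiff n h.
Proof.
  transitivity (ndiff n (fun i => c * h i + 0 * h i)); [apply ndiff_ext; intros; ring |].
  rewrite ndiff_lin; ring.
Qed.

Lemma ndiff_plus n h1 h2 : ndiff n (fun i => h1 i + h2 i) = ndiff n h1 + ndiff n h2.
Proof.
  transitivity (ndiff n (fun i => 1 * h1 i + 1 * h2 i)); [apply ndiff_ext; intros; ring |].
  rewrite ndiff_lin; ring.
Qed.

Lemma ndiff_minus n h1 h2 : ndiff n (fun i => h1 i - h2 i) = ndiff n h1 - ndiff n h2.
Proof.
  transitivity (ndiff n (fun i => 1 * h1 i + (-1) * h2 i)); [apply ndiff_ext; intros; ring |].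
  rewrite ndiff_lin; ring.
Qed.

Lemma ndiff_S n : forall h, ndiff (S n) h = ndiff n h - ndiff n (fun i => h (S i)).
Proof.
  induction n; intros; [reflexivity |].
  change (ndiff (S n) (fun i => h i - h (S i)) = ndiff (S n) h - ndiff (S n) (fun i => h (S i))).
  rewrite !IHn, <- !ndiff_minus; apply ndiff_ext; intros; ring.
Qed.

Lemma ndiff_affine n u v : ndiff (S (S n)) (fun i => u + v * INR i) = 0.
Proof.
  change (ndiff (S n) (fun i => u + v * INR i - (u + v * INR (S i))) = 0).
  rewrite (ndiff_ext _ _ (fun _ => (-v) * 1)) by (intros; rewrite S_INR; ring).
  rewrite ndiff_scal; simpl.
  rewrite (ndiff_ext _ _ (fun _ => 0 * 1)) by (intros; ring).
  rewrite ndiff_scal; ring.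
Qed.

Lemma ndiff_sum n m : forall F : nat -> nat -> R,
  ndiff n (fun i => sum_f_R0 (fun k => F k i) m) = sum_f_R0 (fun k => ndiff n (F k)) m.
Proof.
  induction m; intros; simpl; [apply ndiff_ext; reflexivity |].
  rewrite ndiff_plus, IHm; reflexivity.
Qed.

Lemma pow_1_minus_ndiff n : forall y, (1 - y) ^ n = ndiff n (fun i => y ^ i).
Proof.
  induction n; intros; simpl; [reflexivity |].
  rewrite IHn, <- ndiff_scal; apply ndiff_ext; intros; simpl; ring.
Qed.

Lemma ndiff_bound n : forall h B,
  (forall i, (i <= n)%nat -> Rabs (h i) <= B) -> Rabs (ndiff n h) <= 2 ^ n * B.
Proof.
  induction n; intros h B H; simpl; [rewrite Rmult_1_l; apply H; lia |].
  replace (2 * 2 ^ n * B) with (2 ^ n * (2 * B)) by ring; apply IHn; intros i Hi.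
  assert (Rabs (h i) <= B) by (apply H; lia).
  assert (Rabs (h (S i)) <= B) by (apply H; lia).
  pose proof (Rabs_triang (h i) (- h (S i))) as T; rewrite Rabs_Ropp in T; unfold Rminus; lra.
Qed.

(* x (x+1) ⋯ (x+n): n+1 factors, one more than the Pochhammer symbol (x)_n. *)
Fixpoint rising (n : nat) (x : R) : R :=
  match n with O => x | S k => rising k x * (x + INR (S k)) end.

Lemma rising_pos n x : 0 < x -> 0 < rising n x.
Proof.
  intros Hx; induction n; cbn [rising]; [exact Hx |].
  apply Rmult_lt_0_compat; [exact IHn | pose proof (pos_INR (S n)); lra].
Qed.

Lemma rising_succ n x : x * rising n (x + 1) = rising n x * (x + INR (S n)).
Proof.
  induction n; cbn [rising].
  - simpl; ring.
  - rewrite <- Rmult_assoc, IHn, !S_INR; ring.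
Qed.

Lemma ndiff_inv_shift n : forall x, 0 < x ->
  ndiff n (fun i => / (x + INR i)) = INR (Factorial.fact n) / rising n x.
Proof.
  induction n; intros x Hx; [simpl; field; lra |].
  rewrite ndiff_S, IHn by exact Hx.
  rewrite (ndiff_ext n _ (fun i => / ((x + 1) + INR i))) by (intros; rewrite S_INR; f_equal; ring).
  rewrite IHn by lra.
  replace (rising n (x + 1)) with (rising n x * (x + INR (S n)) / x)
    by (rewrite <- rising_succ; field; lra).
  pose proof (rising_pos n x Hx). pose proof (pos_INR n).
  cbn [rising]; rewrite fact_simpl, mult_INR, !S_INR.
  field; lra.
Qed.

Lemma rising_half n :
  rising n (/ 2) = INR (Factorial.fact (2 * n + 1)) / (2 ^ (2 * n + 1) * INR (Factorial.fact n)).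
Proof.
  induction n; [simpl; field |].
  cbn [rising]; rewrite IHn.
  replace (2 ^ (2 * S n + 1)) with (4 * 2 ^ (2 * n + 1))
    by (replace (2 * S n + 1)%nat with (2 + (2 * n + 1))%nat by lia; rewrite (pow_add 2 2); ring).
  replace (2 * S n + 1)%nat with (S (S (2 * n + 1))) by lia.
  rewrite !fact_simpl, !mult_INR, !S_INR, plus_INR, mult_INR.
  pose proof (pos_INR n). pose proof (lt_0_INR _ (Factorial.lt_O_fact n)).
  assert (0 < 2 ^ (2 * n + 1)) by (apply pow_lt; lra).
  simpl (INR 2); simpl (INR 1).
  field; repeat split; lra.
Qed.

(* The first three Euler–Maclaurin terms for Σ_{k < x} k^p.  The defect vanishes
   for p = 0 and p = 2 and, for p ≥ 4, is a polynomial of degree p - 4. *)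
Definition em_approx (p : nat) (x : R) : R :=
  x ^ S p / INR (S p) - x ^ p / 2 + INR p * x ^ pred p / 12.

Definition em_defect (p : nat) (x : R) : R := em_approx p (x + 1) - em_approx p x - x ^ p.

Lemma em_defect_0 x : em_defect 0 x = 0.
Proof. unfold em_defect, em_approx; simpl; field. Qed.

Lemma em_defect_2 x : em_defect 2 x = 0.
Proof. unfold em_defect, em_approx; simpl; field. Qed.

Lemma em_defect_4 x : em_defect 4 x = / 30.
Proof. unfold em_defect, em_approx; simpl; field. Qed.

Lemma is_derive_em_defect p x : is_derive (em_defect (S p)) x (INR (S p) * em_defect p x).
Proof.
  unfold em_defect, em_approx; auto_derive; [exact I |].
  change (match p with 0%nat => 1 | S _ => INR p + 1 end) with (INR (S p)).
  rewrite !S_INR; simpl pow; pose proof (pos_INR p); field; lra.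
Qed.

Lemma em_defect_bound q :
  exists K, 0 <= K /\ forall x, 0 <= x -> Rabs (em_defect (q + 4) x) <= K * (1 + x) ^ q.
Proof.
  induction q as [| q [K [HK IH]]].
  - exists (/ 30); split; [lra |]; intros x _.
    rewrite em_defect_4, Rabs_right by lra; simpl; lra.
  - set (c := INR (S (q + 4))).
    assert (Hc : 0 <= c) by apply pos_INR.
    exists (c * K + Rabs (em_defect (S q + 4) 0)).
    split; [pose proof (Rabs_pos (em_defect (S q + 4) 0)); nra |].
    intros x Hx.
    assert (Hx1 : 1 <= (1 + x) ^ q) by (apply pow_R1_Rle; lra).
    assert (Hmvt : exists t, 0 <= t <= x /\
      em_defect (S q + 4) x = em_defect (S q + 4) 0 + c * em_defect (q + 4) t * x).
    { destruct (Req_dec x 0) as [-> | Hx0].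
      - exists 0; split; [lra | ring].
      - destruct (MVT_cor2 (em_defect (S q + 4)) (fun t => c * em_defect (q + 4) t) 0 x)
          as [t [Ht Ht']]; [lra | intros; apply is_derive_Reals, is_derive_em_defect |].
        exists t; split; [lra | rewrite Rminus_0_r in Ht; lra]. }
    destruct Hmvt as [t [Ht ->]].
    assert (Hd : Rabs (em_defect (q + 4) t) <= K * (1 + x) ^ q).
    { eapply Rle_trans; [apply IH; lra |].
      apply Rmult_le_compat_l; [exact HK | apply pow_incr; lra]. }
    eapply Rle_trans; [apply Rabs_triang |].
    rewrite !Rabs_mult, (Rabs_right c), (Rabs_right x) by lra.
    pose proof (Rabs_pos (em_defect (q + 4) t)).
    pose proof (Rabs_pos (em_defect (S q + 4) 0)).
    simpl pow; set (y := (1 + x) ^ q) in *; set (d := Rabs (em_defect (S q + 4) 0)) in *.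
    assert (c * Rabs (em_defect (q + 4) t) * x <= c * (K * y) * (1 + x))
      by (apply Rmult_le_compat; nra).
    assert (d <= d * ((1 + x) * y)) by (rewrite <- (Rmult_1_r d) at 1; apply Rmult_le_compat_l; nra).
    nra.
Qed.

Lemma sum_pow_em p m :
  sum_f_R0 (fun k => INR k ^ p) m
  = em_approx p (INR (S m)) - em_approx p 0 - sum_f_R0 (fun k => em_defect p (INR k)) m.
Proof.
  induction m.
  - simpl; unfold em_defect; rewrite Rplus_0_l; ring.
  - rewrite !tech5, IHm; unfold em_defect; rewrite (S_INR (S m)); ring.
Qed.

Lemma sum_f_R0_symmetric (psi : R -> R) : (forall x, psi (- x) = psi x) -> forall m,
  sum_f_R0 (fun j => psi (INR j - INR m)) (2 * m) = 2 * sum_f_R0 (fun k => psi (INR k)) m - psi 0.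
Proof.
  intros Hev; induction m.
  - simpl; rewrite Rminus_0_r; ring.
  - replace (2 * S m)%nat with (S (S (2 * m))) by lia.
    rewrite decomp_sum by lia; change (Init.Nat.pred (S (S (2 * m)))) with (S (2 * m)).
    rewrite tech5, (sum_eq _ (fun j => psi (INR j - INR m))) by (intros; rewrite !S_INR; f_equal; ring).
    rewrite IHm, tech5.
    replace (INR 0 - INR (S m)) with (- INR (S m)) by (simpl; ring).
    replace (INR (S (S (2 * m))) - INR (S m)) with (INR (S m))
      by (rewrite !S_INR, mult_INR; simpl; ring).
    rewrite Hev; ring.
Qed.

Definition moment (i a : nat) : R :=
  sum_f_R0 (fun j => (INR j - (INR a - 1)) ^ (2 * i)) (2 * (a - 1)).

Definition nmoment (i a : nat) : R := moment i a / INR a ^ (2 * i).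

Lemma moment_em i m :
  moment i (S m) = 2 * em_approx (2 * i) (INR (S m)) - 2 * sum_f_R0 (fun k => em_defect (2 * i) (INR k)) m.
Proof.
  unfold moment; replace (S m - 1)%nat with m by lia.
  replace (INR (S m) - 1) with (INR m) by (rewrite S_INR; ring).
  rewrite (sum_f_R0_symmetric (fun x => x ^ (2 * i))) by (intros; rewrite !pow_mult; f_equal; ring).
  rewrite sum_pow_em.
  destruct i.
  - replace (em_approx (2 * 0) 0) with (- / 2) by (unfold em_approx; simpl; field).
    simpl (0 ^ (2 * 0)); field.
  - replace (em_approx (2 * S i) 0) with 0 by (unfold em_approx, Rdiv; rewrite !pow_i by lia; ring).
    rewrite pow_i by lia; ring.
Qed.

Lemma moment_em_low i m : (i <= 1)%nat -> moment i (S m) = 2 * em_approx (2 * i) (INR (S m)).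
Proof.
  intros Hi; rewrite moment_em.
  rewrite (sum_eq _ (fun _ => 0 * 1)) by (intros; rewrite Rmult_0_l;
    destruct i as [| [|]]; [apply em_defect_0 | apply em_defect_2 | lia]).
  rewrite sum_cte; ring.
Qed.

Lemma em_approx_scaled i a : 0 < a ->
  2 * em_approx (2 * i) a / a ^ (2 * i) = a / (/ 2 + INR i) - 1 + INR i / (3 * a).
Proof.
  intros Ha; unfold em_approx.
  destruct i as [| j]; [simpl; field; lra |].
  replace (2 * S j)%nat with (S (S (2 * j))) by lia; cbn [pred pow].
  rewrite !S_INR, mult_INR.
  assert (0 < a ^ (2 * j)) by (apply pow_lt; exact Ha).
  pose proof (pos_INR j); simpl (INR 2).
  field; repeat split; lra.
Qed.

Lemma nmoment_expansion i : exists K, forall m,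
  Rabs (nmoment i (S m) - (INR (S m) / (/ 2 + INR i) - 1 + INR i / (3 * INR (S m))))
  <= K / INR (S m) ^ 3.
Proof.
  assert (Herr : forall m, nmoment i (S m) - (INR (S m) / (/ 2 + INR i) - 1 + INR i / (3 * INR (S m)))
    = (moment i (S m) - 2 * em_approx (2 * i) (INR (S m))) / INR (S m) ^ (2 * i)).
  { intros m; unfold nmoment; rewrite <- em_approx_scaled by apply lt_0_INR, Nat.lt_0_succ.
    field; apply pow_nonzero, not_0_INR; lia. }
  destruct (Compare_dec.le_lt_dec i 1) as [Hi | Hi].
  { exists 0; intros m; rewrite Herr, moment_em_low by exact Hi.
    unfold Rminus at 1; rewrite Rplus_opp_r; unfold Rdiv; rewrite Rmult_0_l, Rmult_0_l, Rabs_R0; lra. }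
  destruct i as [| [| j]]; try lia.
  destruct (em_defect_bound (2 * j)) as [K [HK HD]].
  exists (2 * K); intros m; rewrite Herr, moment_em.
  set (a := INR (S m)).
  assert (Ha : 1 <= a) by (unfold a; rewrite S_INR; pose proof (pos_INR m); lra).
  replace (2 * S (S j))%nat with (2 * j + 4)%nat by lia.
  assert (Hs : Rabs (sum_f_R0 (fun k => em_defect (2 * j + 4) (INR k)) m) <= K * a ^ (2 * j) * a).
  { eapply Rle_trans; [apply sum_f_R0_triangle |].
    eapply Rle_trans; [apply (sum_Rle _ (fun _ => K * a ^ (2 * j))) |].
    - intros k Hk; eapply Rle_trans; [apply HD, pos_INR |].
      apply Rmult_le_compat_l; [exact HK | apply pow_incr].
      apply le_INR in Hk; pose proof (pos_INR k); unfold a; rewrite S_INR; lra.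
    - rewrite sum_cte; right; reflexivity. }
  set (s := sum_f_R0 (fun k => em_defect (2 * j + 4) (INR k)) m) in *.
  assert (Hp : 0 < a ^ (2 * j)) by (apply pow_lt; lra).
  replace (2 * K / a ^ 3) with (2 * (K * a ^ (2 * j) * a) / a ^ (2 * j + 4))
    by (rewrite pow_add; field; lra).
  replace (2 * em_approx (2 * j + 4) a - 2 * s - 2 * em_approx (2 * j + 4) a) with (-2 * s) by ring.
  unfold Rdiv; rewrite Rabs_mult, Rabs_mult, Rabs_inv, (Rabs_pos_eq (a ^ _)) by (apply pow_le; lra).
  rewrite Rabs_left by lra.
  apply Rmult_le_compat_r; [left; apply Rinv_0_lt_compat, pow_lt; lra | lra].
Qed.

Lemma bound_uniform_upto (e : nat -> nat -> R) (w : nat -> R) :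
  (forall m, 0 <= w m) -> (forall i, exists K, forall m, e i m <= K * w m) ->
  forall n, exists K, forall i, (i <= n)%nat -> forall m, e i m <= K * w m.
Proof.
  intros Hw He n; induction n as [| n [K1 H1]].
  - destruct (He 0%nat) as [K HK]; exists K; intros i Hi m.
    replace i with 0%nat by lia; apply HK.
  - destruct (He (S n)) as [K2 H2]; exists (Rmax K1 K2); intros i Hi m.
    assert (Hmax : forall K, K <= Rmax K1 K2 -> K * w m <= Rmax K1 K2 * w m)
      by (intros; apply Rmult_le_compat_r; [apply Hw | assumption]).
    destruct (Nat.eq_dec i (S n)) as [-> | Hne].
    + eapply Rle_trans; [apply H2 | apply Hmax, Rmax_r].
    + eapply Rle_trans; [apply H1; lia | apply Hmax, Rmax_l].
Qed.

Lemma nmoment_expansion_upto n : exists K, forall i, (i <= n)%nat -> forall m,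
  Rabs (nmoment i (S m) - (INR (S m) / (/ 2 + INR i) - 1 + INR i / (3 * INR (S m))))
  <= K / INR (S m) ^ 3.
Proof.
  apply (bound_uniform_upto
    (fun i m => Rabs (nmoment i (S m) - (INR (S m) / (/ 2 + INR i) - 1 + INR i / (3 * INR (S m)))))
    (fun m => / INR (S m) ^ 3)).
  - intros m; left; apply Rinv_0_lt_compat, pow_lt, lt_0_INR; lia.
  - exact nmoment_expansion.
Qed.

Lemma ndiff_hyperbola_affine n A x u v E (h : nat -> R) : 0 < x ->
  (forall i, (i <= S (S n))%nat -> Rabs (h i - (A / (x + INR i) + u + v * INR i)) <= E) ->
  Rabs (ndiff (S (S n)) h - A * (INR (Factorial.fact (S (S n))) / rising (S (S n)) x))
  <= 2 ^ S (S n) * E.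
Proof.
  intros Hx Hh.
  assert (Hmodel : ndiff (S (S n)) (fun i => A / (x + INR i) + u + v * INR i)
                   = A * (INR (Factorial.fact (S (S n))) / rising (S (S n)) x)).
  { rewrite (ndiff_ext _ _ (fun i => A * / (x + INR i) + 1 * (u + v * INR i)))
      by (intros; unfold Rdiv; ring).
    rewrite ndiff_lin, ndiff_inv_shift, ndiff_affine by exact Hx; ring. }
  rewrite <- Hmodel, <- ndiff_minus; apply ndiff_bound, Hh.
Qed.

(* With s = 0 this is 2^(2n+1) (n!)^2 / (2n+1)! = ∫_{-1}^{1} (1 - x^2)^n dx. *)
Definition asym_coef (n s : nat) : R := INR (Factorial.fact n) / rising n (/ 2 + INR s).

Lemma ndiff_nmoment_estimate n s : (2 <= n)%nat -> exists K, forall m,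
  Rabs (ndiff n (fun i => nmoment (s + i) (S m)) - INR (S m) * asym_coef n s)
  <= K / INR (S m) ^ 3.
Proof.
  intros Hn; unfold asym_coef; destruct n as [| [| n]]; try lia.
  destruct (nmoment_expansion_upto (s + S (S n))) as [K HK].
  exists (2 ^ S (S n) * K); intros m.
  set (a := INR (S m)).
  assert (Ha : 0 < a) by (apply lt_0_INR; lia).
  unfold Rdiv at 2; rewrite Rmult_assoc.
  apply (ndiff_hyperbola_affine n a (/ 2 + INR s) (-1 + INR s / (3 * a)) (/ (3 * a))).
  - pose proof (pos_INR s); lra.
  - intros i Hi.
    replace (a / (/ 2 + INR s + INR i) + (-1 + INR s / (3 * a)) + / (3 * a) * INR i)
      with (a / (/ 2 + INR (s + i)) - 1 + INR (s + i) / (3 * a))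
      by (rewrite plus_INR, Rplus_assoc; field; pose proof (pos_INR s); pose proof (pos_INR i); lra).
    apply HK; lia.
Qed.

Lemma weight_ndiff n a x : weight n a x = ndiff n (fun i => x ^ (2 * i) / INR a ^ (2 * i)).
Proof.
  unfold weight; rewrite pow_1_minus_ndiff; apply ndiff_ext; intros i.
  unfold Rdiv; rewrite Rpow_mult_distr, pow_inv, !pow_mult; reflexivity.
Qed.

Lemma fT_ndiff n a : fT n a = ndiff n (fun i => nmoment i a).
Proof.
  unfold fT; rewrite (sum_eq _ _ _ (fun j _ => weight_ndiff n a _)), <- ndiff_sum.
  apply ndiff_ext; intros i; unfold nmoment, moment, Rdiv.
  rewrite Rmult_comm, scal_sum; reflexivity.
Qed.

Lemma UT_ndiff n m :
  UT n (S m) = INR (S m) ^ 2 * ndiff n (fun i => nmoment (1 + i) (S m)) / fT n (S m).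
Proof.
  set (k := fun j => INR j - (INR (S m) - 1)).
  transitivity (sum_f_R0 (fun j => k j ^ 2 * weight n (S m) (k j)) (2 * (S m - 1)) / fT n (S m)).
  - unfold UT, pT, Rdiv; rewrite Rmult_comm, scal_sum; apply sum_eq; intros j Hj; cbv zeta.
    replace (Z.abs (Z.of_nat j - (Z.of_nat (S m) - 1)) <=? Z.of_nat (S m) - 1)%Z with true
      by (symmetry; apply Z.leb_le; lia).
    unfold k; rewrite !minus_IZR, <- !INR_IZR_INZ; simpl (IZR 1); rewrite Rmult_assoc; reflexivity.
  - f_equal.
    rewrite (sum_eq _ _ _ (fun j _ => f_equal (Rmult _) (weight_ndiff n (S m) (k j)))).
    rewrite (sum_eq _ (fun j => ndiff n (fun i => k j ^ 2 * (k j ^ (2 * i) / INR (S m) ^ (2 * i)))))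
      by (intros; symmetry; apply ndiff_scal).
    rewrite <- ndiff_sum, <- ndiff_scal; apply ndiff_ext; intros i.
    unfold nmoment, moment, Rdiv; rewrite (Rmult_comm (sum_f_R0 _ _)), scal_sum, scal_sum.
    apply sum_eq; intros j _; fold (k j).
    assert (INR (S m) <> 0) by (apply not_0_INR; lia).
    replace (2 * (1 + i))%nat with (2 + 2 * i)%nat by lia; rewrite !pow_add; field.
    split; [apply pow_nonzero |]; assumption.
Qed.

Lemma sum_f_R0_ge_first (f : nat -> R) N :
  (forall k, (k <= N)%nat -> 0 <= f k) -> f 0%nat <= sum_f_R0 f N.
Proof.
  induction N as [| N IH]; intros Hf; simpl; [lra |].
  assert (f 0%nat <= sum_f_R0 f N) by (apply IH; intros; apply Hf; lia).
  assert (0 <= f (S N)) by (apply Hf; lia).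
  lra.
Qed.

Lemma weight_nonneg n a x : 0 <= x < INR a -> 0 <= weight n a x.
Proof.
  intros Hx; apply pow_le.
  assert (x ^ 2 <= INR a ^ 2) by (apply pow_incr; lra).
  assert (0 < INR a ^ 2) by (apply pow_lt; lra).
  assert (x ^ 2 / INR a ^ 2 <= 1)
    by (rewrite <- (Rinv_r (INR a ^ 2)) by lra; apply Rmult_le_compat_r;
        [left; apply Rinv_0_lt_compat |]; lra).
  lra.
Qed.

Lemma fT_ge_1 n m : 1 <= fT n (S m).
Proof.
  unfold fT; replace (S m - 1)%nat with m by lia.
  replace (INR (S m) - 1) with (INR m) by (rewrite S_INR; ring).
  rewrite sum_f_R0_symmetric
    by (intros; unfold weight; replace ((- x) ^ 2) with (x ^ 2) by ring; reflexivity).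
  assert (Hw0 : weight n (S m) 0 = 1).
  { unfold weight, Rdiv; rewrite pow_i, Rmult_0_l, Rminus_0_r, pow1 by lia; reflexivity. }
  assert (1 <= sum_f_R0 (fun k => weight n (S m) (INR k)) m).
  { rewrite <- Hw0 at 1; apply (sum_f_R0_ge_first (fun k => weight n (S m) (INR k))).
    intros k Hk; apply weight_nonneg; split; [apply pos_INR | apply lt_INR; lia]. }
  lra.
Qed.

Lemma is_lim_seq_of_inv_bound (u : nat -> R) (l B : R) :
  (forall m, Rabs (u (S m) - l) <= B / INR (S m)) -> is_lim_seq u l.
Proof.
  intros Hu; apply is_lim_seq_incr_1.
  assert (H0 : is_lim_seq (fun m => B / INR (S m)) 0).
  { replace (Finite 0) with (Rbar_mult B (Rbar_inv p_infty)) by (simpl; f_equal; ring).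
    apply is_lim_seq_scal_l, (is_lim_seq_incr_1 (fun m => / INR m)).
    apply is_lim_seq_inv; [exact is_lim_seq_INR | discriminate]. }
  apply is_lim_seq_le_le with (fun m => l - B / INR (S m)) (fun m => l + B / INR (S m)).
  - intros m; specialize (Hu m); apply Rabs_le_between' in Hu; lra.
  - replace (Finite l) with (Finite (l - 0)) by (f_equal; ring).
    apply is_lim_seq_minus'; [apply is_lim_seq_const | exact H0].
  - replace (Finite l) with (Finite (l + 0)) by (f_equal; ring).
    apply is_lim_seq_plus'; [apply is_lim_seq_const | exact H0].
Qed.

Lemma asym_coef_0 n :
  asym_coef n 0 = 2 ^ (2 * n + 1) * INR (Factorial.fact n) ^ 2 / INR (Factorial.fact (2 * n + 1)).
Proof.
  unfold asym_coef; change (INR 0) with 0; rewrite Rplus_0_r, rising_half.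
  pose proof (lt_0_INR _ (Factorial.lt_O_fact n)).
  pose proof (lt_0_INR _ (Factorial.lt_O_fact (2 * n + 1))).
  assert (0 < 2 ^ (2 * n + 1)) by (apply pow_lt; lra).
  field; lra.
Qed.

Lemma asym_coef_pos n s : 0 < asym_coef n s.
Proof.
  apply Rdiv_lt_0_compat; [apply lt_0_INR, Factorial.lt_O_fact |].
  apply rising_pos; pose proof (pos_INR s); lra.
Qed.

Lemma asym_coef_1 n : asym_coef n 1 = asym_coef n 0 / (INR (2 * n + 1) + 2).
Proof.
  unfold asym_coef; change (INR 0) with 0; change (INR 1) with 1; rewrite Rplus_0_r.
  replace (rising n (/ 2 + 1)) with (2 * rising n (/ 2) * (/ 2 + INR (S n)))
    by (rewrite Rmult_assoc, <- rising_succ; field).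
  pose proof (rising_pos n (/ 2) ltac:(lra)). pose proof (pos_INR n).
  rewrite plus_INR, mult_INR, (S_INR n); change (INR 2) with 2; change (INR 1) with 1.
  field; lra.
Qed.

Definition asym_error (n s a : nat) : R :=
  INR a ^ 2 * (ndiff n (fun i => nmoment (s + i) a) - INR a * asym_coef n s).

Lemma is_lim_seq_asym_error n s : (2 <= n)%nat -> is_lim_seq (asym_error n s) 0.
Proof.
  intros Hn; destruct (ndiff_nmoment_estimate n s Hn) as [K HK].
  apply (is_lim_seq_of_inv_bound _ _ K); intros m; unfold asym_error.
  assert (Ha : 0 < INR (S m)) by (apply lt_0_INR; lia).
  rewrite Rminus_0_r, Rabs_mult, (Rabs_pos_eq (_ ^ 2)) by (apply pow_le; lra).
  replace (K / INR (S m)) with (INR (S m) ^ 2 * (K / INR (S m) ^ 3)) by (field; lra).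
  apply Rmult_le_compat_l; [apply pow_le; lra | apply HK].
Qed.

Lemma is_lim_seq_fT_div n : (2 <= n)%nat ->
  is_lim_seq (fun a => fT n a / INR a) (asym_coef n 0).
Proof.
  intros Hn; destruct (ndiff_nmoment_estimate n 0 Hn) as [K HK].
  apply (is_lim_seq_of_inv_bound _ _ K); intros m.
  rewrite fT_ndiff.
  set (e := ndiff n (fun i => nmoment i (S m)) - INR (S m) * asym_coef n 0) in HK.
  assert (Ha : 1 <= INR (S m)) by (rewrite S_INR; pose proof (pos_INR m); lra).
  assert (Ha3 : 1 <= INR (S m) ^ 3) by (apply pow_R1_Rle; lra).
  assert (HK0 : 0 <= K).
  { apply (Rmult_le_reg_r (/ INR (S m) ^ 3)); [apply Rinv_0_lt_compat; lra |].
    rewrite Rmult_0_l; eapply Rle_trans; [apply Rabs_pos | apply HK]. }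
  replace (ndiff n (fun i => nmoment i (S m)) / INR (S m) - asym_coef n 0) with (e / INR (S m))
    by (unfold e; field; lra).
  unfold Rdiv; rewrite Rabs_mult, Rabs_inv, (Rabs_pos_eq (INR (S m))) by lra.
  apply Rmult_le_compat_r; [left; apply Rinv_0_lt_compat; lra |].
  eapply Rle_trans; [apply HK |].
  rewrite <- (Rmult_1_r K) at 2; apply Rmult_le_compat_l; [exact HK0 |].
  rewrite <- Rinv_1; apply Rinv_le_contravar; lra.
Qed.

Lemma fT_1 a : (1 <= a)%nat -> fT 1 a = 4 * INR a / 3 - 1 / (3 * INR a).
Proof.
  intros Ha; destruct a as [| m]; [lia |].
  rewrite fT_ndiff; cbn [ndiff]; unfold nmoment; rewrite !moment_em_low by lia.
  assert (0 < INR (S m)) by (apply lt_0_INR; lia).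
  set (a := INR (S m)) in *; unfold em_approx; simpl; field; lra.
Qed.

Lemma UT_error_eq n m :
  INR (S m) * (UT n (S m) - INR (S m) ^ 2 / (INR (2 * n + 1) + 2))
  = (asym_error n 1 (S m) - asym_error n 0 (S m) / (INR (2 * n + 1) + 2))
    / (fT n (S m) / INR (S m)).
Proof.
  unfold asym_error; rewrite asym_coef_1, UT_ndiff; cbn [Nat.add]; rewrite <- fT_ndiff.
  pose proof (fT_ge_1 n m). pose proof (pos_INR (2 * n + 1)).
  assert (0 < INR (S m)) by (apply lt_0_INR; lia).
  field; lra.
Qed.

Theorem theorem7 :
  (forall a : nat, (1 <= a)%nat -> fT 1 a = 4 * INR a / 3 - 1 / (3 * INR a)) /\
  (forall n : nat, (2 <= n)%nat ->
     is_lim_seq (fun a : nat =>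
       (INR a) ^ 2 *
       (fT n a - 2 ^ (2 * n + 1) * (INR (Factorial.fact n)) ^ 2 / INR (Factorial.fact (2 * n + 1)) * INR a))
       0) /\
  (forall n : nat, (2 <= n)%nat ->
     is_lim_seq (fun a : nat =>
       INR a * (UT n a - (INR a) ^ 2 / (INR (2 * n + 1) + 2)))
       0).
Proof.
  split; [exact fT_1 | split; intros n Hn].
  - eapply is_lim_seq_ext; [| exact (is_lim_seq_asym_error n 0 Hn)].
    intros a; unfold asym_error; rewrite asym_coef_0, <- fT_ndiff; ring.
  - apply is_lim_seq_incr_1.
    eapply is_lim_seq_ext; [intros m; symmetry; apply UT_error_eq |].
    set (d := INR (2 * n + 1) + 2).
    apply (is_lim_seq_incr_1 (fun a => (asym_error n 1 a - asym_error n 0 a / d) / (fT n a / INR a))).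
    pose proof (asym_coef_pos n 0). pose proof (pos_INR (2 * n + 1)).
    replace (Finite 0) with (Finite ((0 - 0 / d) / asym_coef n 0)) by (f_equal; unfold d; field; lra).
    apply is_lim_seq_div'; [| apply is_lim_seq_fT_div, Hn | lra].
    apply is_lim_seq_minus'; [apply is_lim_seq_asym_error, Hn |].
    apply is_lim_seq_div'; [apply is_lim_seq_asym_error, Hn | apply is_lim_seq_const | unfold d; lra].
Qed.
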